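(* The set $\mathcal{P}^{(+)}$ is path-connected.
   Context: Consider the continuous-time LTI system $\dot x = Ax + B_u u + B_d d$, $y = Cx + Dd$, with $x\in\mathbb{R}^n$, $u\in\mathbb{R}^m$, $d,y\in\mathbb{R}^p$ and real matrices of compatible dimensions. For $K\in\mathbb{R}^{m\times n}$ write $A_K = A-B_uK$. For a symmetric $P\in\mathbb{R}^{n\times n}$ let $$M_K(P)=\begin{bmatrix} A_K^\top P + PA_K & PB_d - C^\top\\ B_d^\top P - C & -D-D^\top\end{bmatrix}.$$ The condition $L_{\mathrm{s}}(D,K)$ (resp. $L_{\mathrm{ns}}(D,K)$) on $P$ means: if $D=0$, $A_K^\top P + PA_K\prec 0$ (resp. $\preceq 0$) and $B_d^\top P = C$; if $D\neq 0$, $M_K(P)\prec 0$ (resp. $\preceq 0$). The passivity region is $\mathcal{P}=\{K\in\mathbb{R}^{m\times n}:\exists P\succ 0 \text{ with } L_{\mathrm{ns}}(D,K)\}$ and the strict passivity region is $\mathcal{P}^+=\{K\in\mathbb{R}^{m\times n}:\exists P\succ 0\text{ with } L_{\mathrm{s}}(D,K)\}$. The notation $\mathcal{P}^{(+)}$ stands for either $\mathcal{P}$ or $\mathcal{P}^+$; the statement holds in both cases. (Standing assumption in the paper: $\mathcal{P}^{(+)}\neq\emptyset$.) *)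

From HB Require Import structures.
From mathcomp Require Import all_boot all_order all_algebra.
From mathcomp Require Import all_classical all_reals all_analysis.
Set Implicit Arguments. Unset Strict Implicit. Unset Printing Implicit Defensive.
Import Order.TTheory GRing.Theory Num.Theory.
Local Open Scope ring_scope.
Local Open Scope classical_set_scope.

Definition qform (R : realType) (k : nat) (M : 'M[R]_k) (x : 'rV[R]_k) : R :=
  (x *m M *m x^T) 0 0.

Definition symmetric (R : realType) (k : nat) (M : 'M[R]_k) : Prop := M^T = M.
Definition posdef (R : realType) (k : nat) (M : 'M[R]_k) : Prop :=
  symmetric M /\ forall x : 'rV[R]_k, x != 0 -> 0 < qform M x.
Definition negdef (R : realType) (k : nat) (M : 'M[R]_k) : Prop :=
  symmetric M /\ forall x : 'rV[R]_k, x != 0 -> qform M x < 0.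
Definition negsemidef (R : realType) (k : nat) (M : 'M[R]_k) : Prop :=
  symmetric M /\ forall x : 'rV[R]_k, qform M x <= 0.

Section System.
Variables (R : realType) (n m p : nat).
Variables (A : 'M[R]_n) (Bu : 'M[R]_(n, m)) (Bd : 'M[R]_(n, p))
          (C : 'M[R]_(p, n)) (D : 'M[R]_p).

Definition AK (K : 'M[R]_(m, n)) : 'M[R]_n := A - Bu *m K.

Definition MK (K : 'M[R]_(m, n)) (P : 'M[R]_n) : 'M[R]_(n + p) :=
  block_mx ((AK K)^T *m P + P *m AK K) (P *m Bd - C^T)
           (Bd^T *m P - C)             (- D - D^T).

(* L_s(D,K) (strict = true) and L_ns(D,K) (strict = false) on P *)
Definition Lcond (strict : bool) (K : 'M[R]_(m, n)) (P : 'M[R]_n) : Prop :=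
  if D == 0 then
    (if strict then negdef ((AK K)^T *m P + P *m AK K)
     else negsemidef ((AK K)^T *m P + P *m AK K)) /\ Bd^T *m P = C
  else
    (if strict then negdef (MK K P) else negsemidef (MK K P)).

Definition passivity_region (strict : bool) : set 'M[R]_(m, n) :=
  [set K | exists P : 'M[R]_n, posdef P /\ Lcond strict K P].
End System.

Definition path_connected_set (R : realType) (T : topologicalType) (S : set T) : Prop :=
  forall x y, S x -> S y ->
    exists f : R -> T,
      {within `[0, 1]%classic, continuous f} /\ f 0 = x /\ f 1 = y /\
      (forall t : R, 0 <= t <= 1 -> S (f t)).

From Pilot Require Import Defs.
From HB Require Import structures.
From mathcomp Require Import all_boot all_order all_algebra.
From mathcomp Require Import all_classical all_reals all_analysis.
From mathcomp Require Import lra.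
Import Order.TTheory GRing.Theory Num.Theory.
Local Open Scope ring_scope.
Local Open Scope classical_set_scope.
Set Implicit Arguments. Unset Strict Implicit.
Import numFieldNormedType.Exports.

(* The substitution Q = P^-1, Y = K P^-1 is the classical change
   of variables of LMI synthesis: conjugating the conditions by P (resp. by
   diag(P, I)) turns them into conditions that are jointly affine in (Q, Y),
   and definiteness is preserved under congruence.  The feasible pairs (Q, Y)
   therefore form a convex set, and the passivity region is its image under
   the continuous map (Q, Y) |-> Y Q^-1.  Two gains are joined by the image of
   the segment between corresponding feasible pairs. *)

Lemma convex_comb_lt0 (R : realDomainType) (a b u v : R) :
  0 <= a -> 0 <= b -> a + b = 1 -> u < 0 -> v < 0 -> a * u + b * v < 0.
Proof. by move=> a0 b0 ab u0 v0; case: (leP u v) => uv; nra. Qed.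

Section Definiteness.
Variables (R : realType) (k : nat).
Implicit Types (M N X : 'M[R]_k) (x : 'rV[R]_k).

Lemma qform_congr X M x : qform (X^T *m M *m X) x = qform M (x *m X^T).
Proof. by rewrite /qform trmx_mul trmxK !mulmxA. Qed.

Lemma qformDZ (a b : R) M N x :
  qform (a *: M + b *: N) x = a * qform M x + b * qform N x.
Proof. by rewrite /qform mulmxDr mulmxDl -!scalemxAr -!scalemxAl !mxE. Qed.

Lemma symmetric_congr X M :
  Defs.symmetric M -> Defs.symmetric (X^T *m M *m X).
Proof. by rewrite /Defs.symmetric => sM; rewrite !trmx_mul trmxK sM mulmxA. Qed.

Lemma symmetricDZ (a b : R) M N :
  Defs.symmetric M -> Defs.symmetric N -> Defs.symmetric (a *: M + b *: N).
Proof.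
by rewrite /Defs.symmetric => sM sN; rewrite linearD /= !linearZ /= sM sN.
Qed.

Lemma congr_invmxK X M : X \in unitmx ->
  (invmx X)^T *m (X^T *m M *m X) *m invmx X = M.
Proof.
move=> uX; rewrite trmx_inv !mulmxA mulVmx ?unitmx_tr // mul1mx.
by rewrite -mulmxA mulmxV // mulmx1.
Qed.

Lemma mulmx_tr_neq0 X x : X \in unitmx -> x != 0 -> x *m X^T != 0.
Proof.
move=> uX; apply: contraNneq => xX0.
have uXt : X^T \in unitmx by rewrite unitmx_tr.
by rewrite -(mulmxK uXt x) xX0 mul0mx.
Qed.

Lemma negsemidef_congr X M : negsemidef M -> negsemidef (X^T *m M *m X).
Proof.
by case=> sM M_le0; split=> [|x]; [exact: symmetric_congr | rewrite qform_congr].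
Qed.

Lemma negdef_congr X M : X \in unitmx -> negdef M -> negdef (X^T *m M *m X).
Proof.
move=> uX [sM M_lt0]; split=> [|x x0]; first exact: symmetric_congr.
by rewrite qform_congr; apply/M_lt0/mulmx_tr_neq0.
Qed.

Lemma negsemidef_congrE X M : X \in unitmx ->
  negsemidef (X^T *m M *m X) <-> negsemidef M.
Proof.
move=> uX; split; last exact: negsemidef_congr.
by move=> /(negsemidef_congr (invmx X)); rewrite congr_invmxK.
Qed.

Lemma negdef_congrE X M : X \in unitmx ->
  negdef (X^T *m M *m X) <-> negdef M.
Proof.
move=> uX; split; last exact: negdef_congr.
have uXV : invmx X \in unitmx by rewrite unitmx_inv.
by move=> /(negdef_congr uXV); rewrite congr_invmxK.
Qed.

Lemma posdef_unitmx M : posdef M -> M \in unitmx.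
Proof.
case=> _ M_gt0; rewrite unitmxE unitfE; apply/negP => /det0P [v v0 vM].
by have := M_gt0 v v0; rewrite /qform vM mul0mx mxE ltxx.
Qed.

Lemma posdef_invmx M : posdef M -> posdef (invmx M).
Proof.
move=> pM; have uM := posdef_unitmx pM; case: pM => sM M_gt0.
have sMV : Defs.symmetric (invmx M) by rewrite /Defs.symmetric trmx_inv sM.
split=> // x x0.
have -> : invmx M = (invmx M)^T *m M *m invmx M by rewrite sMV mulVmx // mul1mx.
rewrite qform_congr; apply/M_gt0/mulmx_tr_neq0 => //.
by rewrite unitmx_inv.
Qed.

Lemma negsemidef_conic (a b : R) M N : 0 <= a -> 0 <= b ->
  negsemidef M -> negsemidef N -> negsemidef (a *: M + b *: N).
Proof.
move=> a0 b0 [sM M_le0] [sN N_le0]; split=> [|x]; first exact: symmetricDZ.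
by rewrite qformDZ; have := M_le0 x; have := N_le0 x; nra.
Qed.

Lemma negdef_convex (a b : R) M N : 0 <= a -> 0 <= b -> a + b = 1 ->
  negdef M -> negdef N -> negdef (a *: M + b *: N).
Proof.
move=> a0 b0 ab [sM M_lt0] [sN N_lt0]; split=> [|x x0]; first exact: symmetricDZ.
by rewrite qformDZ convex_comb_lt0 ?M_lt0 ?N_lt0.
Qed.

Lemma posdef_convex (a b : R) M N : 0 <= a -> 0 <= b -> a + b = 1 ->
  posdef M -> posdef N -> posdef (a *: M + b *: N).
Proof.
move=> a0 b0 ab [sM M_gt0] [sN N_gt0]; split=> [|x x0]; first exact: symmetricDZ.
rewrite qformDZ -oppr_lt0 opprD -!mulrN.
by rewrite convex_comb_lt0 ?oppr_lt0 ?M_gt0 ?N_gt0.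
Qed.
End Definiteness.

Definition negdef_if (R : realType) (k : nat) (strict : bool) (M : 'M[R]_k) :=
  if strict then negdef M else negsemidef M.

Lemma negdef_if_congrE (R : realType) (k : nat) strict (X M : 'M[R]_k) :
  X \in unitmx -> negdef_if strict (X^T *m M *m X) <-> negdef_if strict M.
Proof. by case: strict => uX; [exact: negdef_congrE | exact: negsemidef_congrE]. Qed.

Lemma negdef_if_convex (R : realType) (k : nat) strict (a b : R)
    (M N : 'M[R]_k) :
  0 <= a -> 0 <= b -> a + b = 1 ->
  negdef_if strict M -> negdef_if strict N -> negdef_if strict (a *: M + b *: N).
Proof. by case: strict => a0 b0 ab; [exact: negdef_convex | exact: negsemidef_conic]. Qed.

Lemma convex_combBr (R : ringType) (V : lmodType R) (a b : R) (u x y : V) :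
  a + b = 1 -> a *: (u - x) + b *: (u - y) = u - (a *: x + b *: y).
Proof. by move=> ab; rewrite !scalerBr addrACA -scalerDl ab scale1r opprD. Qed.

Section DualCoordinates.
Variables (R : realType) (n m p : nat).
Variables (A : 'M[R]_n) (Bu : 'M[R]_(n, m)) (Bd : 'M[R]_(n, p))
          (C : 'M[R]_(p, n)) (D : 'M[R]_p).
Implicit Types (P Q : 'M[R]_n) (K Y : 'M[R]_(m, n)).

Definition dual_lyap Q Y : 'M[R]_n :=
  A *m Q + Q *m A^T - (Bu *m Y + (Bu *m Y)^T).

Definition dual_block Q Y : 'M[R]_(n + p) :=
  block_mx (dual_lyap Q Y) (Bd - Q *m C^T) (Bd^T - C *m Q) (- D - D^T).

Definition Ldual (strict : bool) Q Y : Prop :=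
  if D == 0 then negdef_if strict (dual_lyap Q Y) /\ C *m Q = Bd^T
  else negdef_if strict (dual_block Q Y).

Lemma dual_lyap_mulmx Q K : Q^T = Q ->
  dual_lyap Q (K *m Q) = AK A Bu K *m Q + Q *m (AK A Bu K)^T.
Proof.
move=> sQ; rewrite /dual_lyap /AK linearB /= !trmx_mul sQ.
by rewrite mulmxBl mulmxBr !mulmxA opprD addrACA.
Qed.

Lemma lyap_congr P K : P^T = P -> P \in unitmx ->
  (AK A Bu K)^T *m P + P *m AK A Bu K =
  P^T *m dual_lyap (invmx P) (K *m invmx P) *m P.
Proof.
move=> sP uP; rewrite dual_lyap_mulmx ?trmx_inv ?sP //.
rewrite mulmxDr mulmxDl -!mulmxA mulVmx // mulmx1 !mulmxA mulmxV // mul1mx.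
by rewrite addrC.
Qed.

Lemma MK_congr P K : P^T = P -> P \in unitmx ->
  MK A Bu Bd C D K P =
  (block_mx P 0 0 1%:M)^T *m dual_block (invmx P) (K *m invmx P)
    *m block_mx P 0 0 1%:M.
Proof.
move=> sP uP; rewrite /MK /dual_block tr_block_mx !trmx0 trmx1 sP !mulmx_block.
rewrite !(mul0mx, mulmx0, addr0, add0r, mul1mx, mulmx1) lyap_congr // sP.
congr block_mx; first by rewrite mulmxBr mulmxA mulmxV // mul1mx.
by rewrite mulmxBl -mulmxA mulVmx // mulmx1.
Qed.

Lemma Lcond_dualE strict P K : posdef P ->
  Lcond A Bu Bd C D strict K P <-> Ldual strict (invmx P) (K *m invmx P).
Proof.
move=> pP; have uP := posdef_unitmx pP; have [sP _] := pP.
rewrite /Lcond /Ldual; case: eqP => _; last first.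
  have uPI : block_mx P 0 0 (1%:M : 'M[R]_p) \in unitmx.
    by rewrite unitmxE det_ublock det1 mulr1 -unitmxE.
  by rewrite MK_congr // -(negdef_if_congrE strict _ uPI).
rewrite lyap_congr // -/(negdef_if _ _) negdef_if_congrE //.
by split=> -[L E]; split=> //; rewrite -E ?mulmxK ?mulmxKV.
Qed.

Lemma dual_lyapD Q0 Q1 Y0 Y1 :
  dual_lyap (Q0 + Q1) (Y0 + Y1) = dual_lyap Q0 Y0 + dual_lyap Q1 Y1.
Proof.
rewrite /dual_lyap mulmxDr mulmxDl mulmxDr [(_ + _)^T]linearD /=.
by rewrite (addrACA (A *m Q0)) (addrACA (Bu *m Y0)) opprD; apply: addrACA.
Qed.

Lemma dual_lyapZ a Q Y : dual_lyap (a *: Q) (a *: Y) = a *: dual_lyap Q Y.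
Proof.
rewrite /dual_lyap -!scalemxAr -scalemxAl linearZ /=.
by rewrite -!scalerDr -scalerN -scalerDr.
Qed.

Lemma Ldual_convex strict (a b : R) Q0 Q1 Y0 Y1 :
  0 <= a -> 0 <= b -> a + b = 1 ->
  Ldual strict Q0 Y0 -> Ldual strict Q1 Y1 ->
  Ldual strict (a *: Q0 + b *: Q1) (a *: Y0 + b *: Y1).
Proof.
move=> a0 b0 ab; rewrite /Ldual dual_lyapD !dual_lyapZ; case: eqP => _.
  move=> [L0 E0] [L1 E1]; split; first exact: negdef_if_convex.
  by rewrite mulmxDr -!scalemxAr E0 E1 -scalerDl ab scale1r.
move=> L0 L1; rewrite /dual_block dual_lyapD !dual_lyapZ.
rewrite (_ : block_mx _ _ _ _ = a *: dual_block Q0 Y0 + b *: dual_block Q1 Y1).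
  exact: negdef_if_convex.
rewrite !scale_block_mx add_block_mx !convex_combBr // -scalerDl ab scale1r.
by rewrite mulmxDl mulmxDr -!scalemxAl -!scalemxAr.
Qed.

Lemma passivity_region_dualE strict : passivity_region A Bu Bd C D strict =
  [set K | exists Q Y, (posdef Q /\ Ldual strict Q Y) /\ K = Y *m invmx Q].
Proof.
apply/seteqP; split=> K.
  move=> [P [pP LP]]; exists (invmx P), (K *m invmx P); split.
    by split; [exact: posdef_invmx | exact/Lcond_dualE].
  by rewrite invmxK mulmxKV // posdef_unitmx.
move=> [Q [Y [[pQ LQ] ->]]]; have pQV := posdef_invmx pQ.
exists (invmx Q); split=> //; apply/(Lcond_dualE _ _ pQV).
by rewrite invmxK mulmxKV // posdef_unitmx.
Qed.

End DualCoordinates.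

Section MatrixLimits.
Context {R : realFieldType} {T : Type} (F : set_system T) {FF : Filter F}.

Lemma cvg_mxP a b (f : T -> 'M[R]_(a, b)) (M : 'M[R]_(a, b)) :
  f @ F --> M <-> forall i j, f x i j @[x --> F] --> M i j.
Proof.
split=> [fM i j|fMij]; apply/cvgrPdist_le => /= e e0.
  near=> x; apply: le_trans (_ : `|M - f x| <= e).
    rewrite [leRHS]/Num.Def.normr/= mx_normrE.
    by apply: le_trans (le_bigmax _ _ (i, j)); rewrite !mxE.
  by near: x; exact: (cvgrPdist_le _ _).1 fM e e0.
near=> x; rewrite /Num.Def.normr/= mx_normrE (bigmax_le _ (ltW e0))//= => ij _.
rewrite !mxE; move: ij; near: x; apply: filter_forall => -[i j].
exact: (cvgrPdist_le _ _).1 (fMij i j) e e0.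
Unshelve. all: by end_near. Qed.

Lemma cvg_mulmx a b c (f : T -> 'M[R]_(a, b)) (g : T -> 'M[R]_(b, c))
    (M : 'M[R]_(a, b)) (N : 'M[R]_(b, c)) :
  f @ F --> M -> g @ F --> N -> f x *m g x @[x --> F] --> M *m N.
Proof.
move=> /cvg_mxP fM /cvg_mxP gN; apply/cvg_mxP => i j.
rewrite (_ : (fun x => _) = fun x => \sum_k f x i k * g x k j); last first.
  by apply/funext => x; rewrite mxE.
rewrite mxE; apply: (@cvg_big _ _ +%R 0 xpredT add_continuous) => // k _.
exact: cvgM.
Qed.

Lemma cvg_det k (f : T -> 'M[R]_k) (M : 'M[R]_k) :
  f @ F --> M -> \det (f x) @[x --> F] --> \det M.
Proof.
move=> /cvg_mxP fM; rewrite /determinant.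
apply: (@cvg_big _ _ +%R 0 xpredT add_continuous) => // s _.
apply: cvgM; first exact: cvg_cst.
by apply: (@cvg_big R _ *%R 1 xpredT mul_continuous) => // i _; apply: fM.
Qed.

Lemma cvg_adj k (f : T -> 'M[R]_k) (M : 'M[R]_k) :
  f @ F --> M -> \adj (f x) @[x --> F] --> \adj M.
Proof.
move=> fM; apply/cvg_mxP => i j.
rewrite (_ : (fun x => _) =
    fun x => (-1) ^+ (j + i) * \det (row' j (col' i (f x)))); last first.
  by apply/funext => x; rewrite mxE.
rewrite mxE; apply: cvgM; first exact: cvg_cst.
apply: cvg_det; apply/cvg_mxP => k' l.
rewrite (_ : (fun x => _) = fun x => f x (lift j k') (lift i l)); last first.
  by apply/funext => x; rewrite !mxE.
by rewrite !mxE; move/cvg_mxP : fM; apply.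
Qed.

Lemma cvg_invmx k (f : T -> 'M[R]_k) (M : 'M[R]_k) : M \in unitmx ->
  f @ F --> M -> invmx (f x) @[x --> F] --> invmx M.
Proof.
rewrite unitmxE unitfE => detM fM.
have near_unit : \forall x \near F, f x \in unitmx.
  by near do rewrite unitmxE unitfE; apply: cvgr_neq0 detM; apply: cvg_det.
apply: (@cvg_trans _ ((fun x => (\det (f x))^-1 *: \adj (f x)) @ F)).
  apply: near_eq_cvg; apply: filterS near_unit => x fx_unit.
  by rewrite /invmx fx_unit.
rewrite /invmx unitmxE unitfE detM.
by apply: cvgZ; [apply: cvgV => //; apply: cvg_det | apply: cvg_adj].
Unshelve. all: by end_near. Qed.
End MatrixLimits.

Lemma continuous_lerp (R : realFieldType) (V : normedModType R) (x y : V) :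
  continuous (fun t : R => (1 - t) *: x + t *: y).
Proof.
move=> t; apply: cvgD; apply: cvgZ; try exact: cvg_cst; try exact: cvg_id.
by apply: cvgB; [exact: cvg_cst | exact: cvg_id].
Qed.

Lemma path_connected_mul_invmx (R : realType) (m n : nat)
    (S : 'M[R]_n -> 'M[R]_(m, n) -> Prop) :
  (forall Q0 Y0 Q1 Y1 t, S Q0 Y0 -> S Q1 Y1 -> 0 <= t <= 1 ->
     S ((1 - t) *: Q0 + t *: Q1) ((1 - t) *: Y0 + t *: Y1)) ->
  (forall Q Y, S Q Y -> Q \in unitmx) ->
  @path_connected_set R ('M[R]_(m, n) : normedModType R)
    [set K | exists Q Y, S Q Y /\ K = Y *m invmx Q].
Proof.
move=> S_convex S_unit _ _ [Q0 [Y0 [S0 ->]]] [Q1 [Y1 [S1 ->]]].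
pose Qt t : 'M[R]_n := (1 - t) *: Q0 + t *: Q1.
pose Yt t : 'M[R]_(m, n) := (1 - t) *: Y0 + t *: Y1.
have St t : 0 <= t <= 1 -> S (Qt t) (Yt t) by exact: S_convex.
have lerp0 (V : lmodType R) (x y : V) : (1 - 0) *: x + 0 *: y = x.
  by rewrite subr0 scale1r scale0r addr0.
have lerp1 (V : lmodType R) (x y : V) : (1 - 1) *: x + 1 *: y = y.
  by rewrite subrr scale0r add0r scale1r.
exists (fun t => Yt t *m invmx (Qt t)); split; last split; last split.
- apply: continuous_in_subspaceT => t /set_mem /=; rewrite in_itv /= => t01.
  apply: cvg_mulmx; first exact: continuous_lerp.
  by apply: cvg_invmx; [exact: S_unit (St t t01) | exact: continuous_lerp].
- by rewrite /Yt /Qt !lerp0.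
- by rewrite /Yt /Qt !lerp1.
- by move=> t t01; exists (Qt t), (Yt t); split; first exact: St.
Qed.

Theorem lemma4 (R : realType) (n m p : nat)
  (A : 'M[R]_n) (Bu : 'M[R]_(n, m)) (Bd : 'M[R]_(n, p))
  (C : 'M[R]_(p, n)) (D : 'M[R]_p) (strict : bool) :
  passivity_region A Bu Bd C D strict !=set0 ->
  @path_connected_set R ('M[R]_(m, n) : normedModType R) (passivity_region A Bu Bd C D strict).
Proof.
move=> _; rewrite passivity_region_dualE.
apply: path_connected_mul_invmx => [Q0 Y0 Q1 Y1 t [pQ0 L0] [pQ1 L1]|Q Y [pQ _]].
  move=> /andP[t_ge0 t_le1]; have t'_ge0 : 0 <= 1 - t by rewrite subr_ge0.
  have t_sum : 1 - t + t = 1 by rewrite subrK.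
  by split; [exact: posdef_convex | exact: Ldual_convex].
exact: posdef_unitmx.
Qed.
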